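(* Let $T$ be a tree rooted at a vertex $v$ and let $\bar T$ be a pruning of $T$. Then $v\in\mathcal{A}(T)$ if and only if $v\in\mathcal{A}(\bar T)$, and $v\in\mathcal{N}(T)$ if and only if $v\in\mathcal{N}(\bar T)$.
   Context: All graphs are finite, simple and undirected. A dissociation set of a graph $G$ is a set $F\subseteq V(G)$ such that $G[F]$ has maximum degree at most $1$; a maximum dissociation set is one of maximum cardinality. $\mathcal{A}(G)$ is the set of vertices contained in every maximum dissociation set of $G$; $\mathcal{N}(G)$ is the set of vertices contained in no maximum dissociation set of $G$. In a rooted tree, for a vertex $u$, $C(u)$ is the set of children of $u$, $D[u]$ is the set consisting of $u$ and all its descendants, and $T_u$ is the subtree induced by $D[u]$. A branch vertex is a vertex of degree at least $3$. Pruning: let $T$ be rooted at $v$. While the current tree has a branch vertex different from $v$, choose such a branch vertex $u\ne v$ at maximum distance from $v$; then every proper descendant of $u$ has degree at most $2$, so for each child $w$ of $u$ the subtree $T_w$ is a path with end vertex $w$, and for $i\in\{0,1,2\}$ let $C^i(u)$ be the set of children $w$ of $u$ with $|V(T_w)|\equiv i \pmod 3$. If $|C^2(u)|\ge 1$ or $|C^1(u)|\ge 2$, delete all vertices of $D[u]$; if $|C^2(u)|=0$ and $|C^1(u)|\le 1$, delete all vertices of $D[w]$ for every $w\in C(u)\setminus\{z\}$, where $z$ is the unique vertex of $C^1(u)$ if $|C^1(u)|=1$ and an arbitrary child of $u$ otherwise. When no branch vertex other than $v$ remains, the resulting tree $\bar T$ is called a pruning of $T$. *)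

From mathcomp Require Import all_boot.
Set Implicit Arguments. Unset Strict Implicit. Unset Printing Implicit Defensive.

(* A finite simple graph is given by a vertex set S : {set T} inside a finite
   type T, with adjacency the restriction of a symmetric irreflexive relation
   e : rel T.  Deleting vertices = shrinking S (induced subgraph). *)
Section Graphs.
Variables (T : finType) (e : rel T).

Definition induced (S : {set T}) : rel T := fun x y => [&& x \in S, y \in S & e x y].
Definition nbrs (S : {set T}) (x : T) : {set T} := [set y in S | e x y].
Definition deg (S : {set T}) (x : T) : nat := #|nbrs S x|.

Definition connected_set (S : {set T}) : Prop :=
  forall x y, x \in S -> y \in S -> connect (induced S) x y.
Definition is_cycle (S : {set T}) (c : seq T) : bool :=
  [&& uniq c, 2 < size c, all (fun x => x \in S) c & cycle e c].
Definition is_tree (S : {set T}) : Prop :=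
  S != set0 /\ connected_set S /\ forall c, ~~ is_cycle S c.

Definition reach (S : {set T}) (x : T) (k : nat) : {set T} :=
  iter k (fun A => A :|: [set y in S | [exists z in A, e z y]]) ([set x] :&: S).
Definition dist (S : {set T}) (x y : T) : nat :=
  find (fun k => y \in reach S x k) (iota 0 #|T|).

Definition desc (S : {set T}) (v u : T) : {set T} :=
  [set w in S | dist S v w == dist S v u + dist S u w].
Definition children (S : {set T}) (v u : T) : {set T} :=
  [set w in nbrs S u | dist S v w == (dist S v u).+1].
Definition childmod (S : {set T}) (v u : T) (i : nat) : {set T} :=
  [set w in children S v u | #|desc S v w| %% 3 == i].

Definition prune_step (v : T) (S S' : {set T}) : Prop :=
  exists u, [/\ u \in S, u != v, 2 < deg S u,
    (forall u', u' \in S -> u' != v -> 2 < deg S u' -> dist S v u' <= dist S v u) &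
    (if (0 < #|childmod S v u 2|) || (1 < #|childmod S v u 1|)
     then S' = S :\: desc S v u
     else exists z, [/\ z \in children S v u,
                        (#|childmod S v u 1| == 1 -> z \in childmod S v u 1) &
                        S' = S :\: \bigcup_(w in children S v u | w != z) desc S v w])].

Inductive pruning (v : T) : {set T} -> {set T} -> Prop :=
| pruning_done (S : {set T}) : (forall u, u \in S -> u != v -> deg S u <= 2) -> pruning v S S
| pruning_step (S S' Sb : {set T}) : prune_step v S S' -> pruning v S' Sb -> pruning v S Sb.

Definition dissociation (S F : {set T}) : bool :=
  (F \subset S) && [forall x in F, #|[set y in F | e x y]| <= 1].
Definition max_dissociation (S F : {set T}) : Prop :=
  dissociation S F /\ forall F', dissociation S F' -> #|F'| <= #|F|.
Definition in_A (S : {set T}) (x : T) : Prop :=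
  forall F, max_dissociation S F -> x \in F.
Definition in_N (S : {set T}) (x : T) : Prop :=
  forall F, max_dissociation S F -> x \notin F.

End Graphs.

(* One pruning step deletes, below a deepest branch vertex u, either the whole
   subtree D[u] or the subtrees D[w] of all children w other than a chosen z.
   Every deleted piece D is detachable: some maximum dissociation set F0 of D
   has no edge towards the rest of the graph.  Then F |-> F \ D and
   F1 |-> F1 \cup F0 exchange maximum dissociation sets of the graph and of
   the graph without D, so every vertex outside D, in particular v, keeps its
   membership in A(G) and in N(G) ([detach_same_status]).

   Below u every subtree D[w] is a path ending at w, whose dissociation number
   is n - n/3 for n = |D[w]|.  A deleted sibling subtree has n = 0 mod 3, and
   some maximum set of that path avoids w.  When D[u] is deleted, some child
   has n = 2 mod 3 or two children have n = 1 mod 3; then a maximum set of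
   D[u] containing u is deficient on some child subtree and can be exchanged
   there for one avoiding u.  In both cases the only edge leaving the piece
   starts at a vertex outside F0. *)
From mathcomp Require Import all_boot zify.
Set Implicit Arguments. Unset Strict Implicit. Unset Printing Implicit Defensive.

(* [lia] on the arithmetic hypotheses only: the contexts below carry many
   set-theoretic facts that are irrelevant to the linear arithmetic. *)
Ltac nat_lia := repeat match goal with
  | H : is_true (leq _ _) |- _ => revert H
  | H : @eq ?t _ _ |- _ => unify t nat; revert H
  end; clear; intros; lia.

Section Distances.
Variables (T : finType) (e : rel T).

Lemma reach_succ (S : {set T}) x k y : (y \in reach e S x k.+1) =
  (y \in reach e S x k) || ((y \in S) && [exists z in reach e S x k, e z y]).
Proof. by rewrite /reach iterS -/(reach e S x k) in_setU inE. Qed.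

Lemma reach0 (S : {set T}) x y : (y \in reach e S x 0) = (y == x) && (x \in S).
Proof. by rewrite /reach /= in_setI in_set1; case: eqP => // ->. Qed.

Lemma reach_subset (S : {set T}) x k : reach e S x k \subset S.
Proof.
elim: k => [|k IH]; apply/subsetP => y; first by rewrite reach0 => /andP[/eqP-> ].
by rewrite reach_succ => /orP[/(subsetP IH)|/andP[]].
Qed.

Lemma reach_mono (S : {set T}) x k m : k <= m -> reach e S x k \subset reach e S x m.
Proof.
elim: m => [|m IH]; first by rewrite leqn0 => /eqP->.
rewrite leq_eqVlt => /orP[/eqP->//|]; rewrite ltnS => /IH H.
by apply/subsetP => y /(subsetP H) Hy; rewrite reach_succ Hy.
Qed.

Lemma dist_leq (S : {set T}) x y k : y \in reach e S x k -> dist e S x y <= k.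
Proof.
move=> Hy; rewrite /dist; case: (ltnP k #|T|) => Hk.
  rewrite leqNgt; apply/negP => /(before_find 0).
  by rewrite nth_iota // add0n Hy.
by apply: leq_trans (find_size _ _) _; rewrite size_iota.
Qed.

Lemma dist_reached (S : {set T}) x y k : y \in reach e S x k -> k < #|T| ->
  y \in reach e S x (dist e S x y) /\ dist e S x y < #|T|.
Proof.
move=> Hy Hk.
have Hh : has (fun k => y \in reach e S x k) (iota 0 #|T|).
  by apply/hasP; exists k => //; rewrite mem_iota.
have Hf := Hh; rewrite has_find size_iota in Hf; split => //.
by have := nth_find 0 Hh; rewrite nth_iota // add0n.
Qed.

Lemma induced_path_in (A : {set T}) a p : path (induced e A) a p -> all (mem A) p.
Proof. by elim: p a => [|b p IH] a //= /andP[/and3P[_ -> _] /IH]. Qed.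

Lemma walk_reach (S : {set T}) x p : x \in S -> path (induced e S) x p ->
  last x p \in reach e S x (size p).
Proof.
move=> xS; elim/last_ind: p => [|p z IH]; first by rewrite /= reach0 eqxx xS.
rewrite rcons_path last_rcons size_rcons => /andP[/IH H /and3P[_ zS ez]].
by rewrite reach_succ zS; apply/orP; right; apply/existsP; exists (last x p); rewrite H.
Qed.

Lemma reach_trans (S : {set T}) x y z a b : y \in reach e S x a -> z \in reach e S y b ->
  z \in reach e S x (a + b).
Proof.
move=> Hy; elim: b z => [|b IH] z; first by rewrite reach0 addn0 => /andP[/eqP-> _].
rewrite reach_succ addnS => /orP[/IH H|/andP[zS /existsP[w /andP[/IH Hw ew]]]].
  exact: (subsetP (reach_mono S x (leqnSn _))).
by rewrite reach_succ zS; apply/orP; right; apply/existsP; exists w; rewrite Hw.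
Qed.

Lemma dist_refl (S : {set T}) x : x \in S -> dist e S x x = 0.
Proof. by move=> xS; apply/eqP; rewrite -leqn0; apply: dist_leq; rewrite reach0 eqxx xS. Qed.

(* In a connected vertex set, [dist] is the usual graph distance. *)
Section Connected.
Variable S : {set T}.
Hypothesis conn : connected_set e S.

Lemma reach_dist x y : x \in S -> y \in S ->
  y \in reach e S x (dist e S x y) /\ dist e S x y < #|T|.
Proof.
move=> xS yS; have /connectP[p Hp ->] := conn xS yS.
case: (shortenP Hp) => p' Hp' Up' _.
apply: (dist_reached (walk_reach xS Hp')).
have := card_uniqP Up'; rewrite /= => Hc.
by have := max_card (mem (x :: p')); rewrite Hc.
Qed.

Lemma dist_triangle x y z : x \in S -> y \in S -> z \in S ->
  dist e S x z <= dist e S x y + dist e S y z.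
Proof.
move=> xS yS zS; apply: dist_leq.
exact: (reach_trans (reach_dist xS yS).1 (reach_dist yS zS).1).
Qed.

Lemma dist_edge x y z : x \in S -> y \in S -> z \in S -> e y z ->
  dist e S x z <= (dist e S x y).+1.
Proof.
move=> xS yS zS eyz; apply: dist_leq; rewrite reach_succ zS; apply/orP; right.
by apply/existsP; exists y; rewrite eyz (reach_dist xS yS).1.
Qed.

Lemma dist_eq0 x y : x \in S -> y \in S -> dist e S x y = 0 -> y = x.
Proof. by move=> xS yS H; have := (reach_dist xS yS).1; rewrite H reach0 => /andP[/eqP]. Qed.

Lemma dist_pred x y : x \in S -> y \in S -> y != x ->
  exists2 z, z \in S & e z y /\ (dist e S x z).+1 = dist e S x y.
Proof.
move=> xS yS yx; case Hk: (dist e S x y) => [|k].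
  by move: (dist_eq0 xS yS Hk) yx => ->; rewrite eqxx.
have := (reach_dist xS yS).1; rewrite Hk reach_succ => /orP[/dist_leq|].
  by rewrite Hk ltnn.
case/andP => _ /existsP[z /andP[Hz ezy]].
have zS : z \in S by apply: (subsetP (reach_subset S x k)).
exists z => //; split => //.
have := dist_leq Hz; have := dist_edge xS zS yS ezy; nat_lia.
Qed.

End Connected.
End Distances.

Section Dissociation.
Variables (T : finType) (e : rel T).

Definition diss_num (S : {set T}) : nat :=
  \max_(F : {set T} | dissociation e S F) #|F|.

Definition same_status (S S' : {set T}) (x : T) : Prop :=
  (in_A e S x <-> in_A e S' x) /\ (in_N e S x <-> in_N e S' x).

Lemma same_status_trans (S1 S2 S3 : {set T}) x :
  same_status S1 S2 x -> same_status S2 S3 x -> same_status S1 S3 x.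
Proof. by move=> [H1 H2] [H3 H4]; split; [rewrite H1 H3|rewrite H2 H4]. Qed.

Lemma dissociation_set0 (S : {set T}) : dissociation e S set0.
Proof. by rewrite /dissociation sub0set; apply/forall_inP => x; rewrite inE. Qed.

Lemma dissociation_in (S F : {set T}) : dissociation e S F -> F \subset S.
Proof. by case/andP. Qed.

Lemma dissociation_nbrs (S F : {set T}) x : dissociation e S F -> x \in F ->
  #|[set y in F | e x y]| <= 1.
Proof. by case/andP => _ /forall_inP; apply. Qed.

Lemma dissociation_two_nbrs (S F : {set T}) x y z : dissociation e S F ->
  x \in F -> y \in F -> z \in F -> y != z -> e x y -> e x z -> False.
Proof.
move=> dF xF yF zF yz exy exz; have := dissociation_nbrs dF xF.
suff : 1 < #|[set y0 in F | e x y0]| by case: ltngtP.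
by apply/card_gt1P; exists y, z; rewrite !inE yF zF exy exz.
Qed.

Lemma dissociation_subset (S S' F F' : {set T}) : dissociation e S F ->
  F' \subset F -> F' \subset S' -> dissociation e S' F'.
Proof.
rewrite /dissociation => /andP[_ /forall_inP H] sub sub'; rewrite sub'.
apply/forall_inP => x xF'; apply: leq_trans (H x (subsetP sub x xF')).
apply: subset_leq_card; apply/subsetP => y; rewrite !inE => /andP[yF' ->].
by rewrite (subsetP sub _ yF').
Qed.

Lemma dissociation_setI (S F D : {set T}) : dissociation e S F ->
  dissociation e D (F :&: D).
Proof. by move=> dF; apply: (dissociation_subset dF); [exact: subsetIl|exact: subsetIr]. Qed.

Lemma dissociation_setD (S F D : {set T}) : dissociation e S F ->
  dissociation e (S :\: D) (F :\: D).
Proof.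
move=> dF; apply: (dissociation_subset dF); first exact: subsetDl.
exact: setSD (dissociation_in dF).
Qed.

Lemma dissociation_union (S F1 F2 : {set T}) : symmetric e ->
  dissociation e S F1 -> dissociation e S F2 ->
  (forall x y, x \in F1 -> y \in F2 -> ~~ e x y) -> dissociation e S (F1 :|: F2).
Proof.
move=> esym dF1 dF2 sep; rewrite /dissociation subUset !dissociation_in //=.
have nbrs_in (F G : {set T}) x : dissociation e S F -> x \in F ->
    (forall y, y \in G -> ~~ e x y) -> #|[set y in F :|: G | e x y]| <= 1.
  move=> dF xF sepG; apply: leq_trans (dissociation_nbrs dF xF).
  apply: subset_leq_card; apply/subsetP => y; rewrite !inE => /andP[/orP[->//|yG] exy].
  by move: (sepG y yG); rewrite exy.
apply/forall_inP => x; rewrite in_setU => /orP[xF1|xF2].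
  by apply: nbrs_in => // y; apply: sep.
by rewrite setUC; apply: nbrs_in => // y yF1; rewrite esym; apply: sep.
Qed.

Lemma diss_num_ge (S F : {set T}) : dissociation e S F -> #|F| <= diss_num S.
Proof. exact: (leq_bigmax_cond F). Qed.

Lemma diss_num_attained (S : {set T}) :
  exists2 F, dissociation e S F & #|F| = diss_num S.
Proof.
have [|F HF HE] := @eq_bigmax_cond _ (fun F : {set T} => dissociation e S F) (fun F => #|F|).
  by apply/card_gt0P; exists set0; rewrite /in_mem /= dissociation_set0.
by exists F; rewrite // /diss_num HE.
Qed.

Lemma max_dissociationP (S F : {set T}) : dissociation e S F -> diss_num S <= #|F| ->
  max_dissociation e S F.
Proof. by move=> H1 H2; split => // F' /diss_num_ge H; apply: leq_trans H H2. Qed.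

Lemma max_dissociation_card (S F : {set T}) : max_dissociation e S F -> #|F| = diss_num S.
Proof.
case=> H1 H2; apply/eqP; rewrite eqn_leq diss_num_ge //.
by have [F' H3 <-] := diss_num_attained S; apply: H2.
Qed.

Lemma max_dissociation_exists (S : {set T}) : exists F, max_dissociation e S F.
Proof. by have [F H1 H2] := diss_num_attained S; exists F; apply: max_dissociationP; rewrite ?H2. Qed.

Definition detachable (S D : {set T}) : Prop :=
  exists2 F0, max_dissociation e D F0 &
    forall a y, a \in F0 -> y \in S :\: D -> ~~ e a y.

Lemma detachable_subset (S S' D : {set T}) : S' \subset S -> detachable S D ->
  detachable S' D.
Proof.
move=> sub [F0 mF0 sep]; exists F0 => // a y aF0 yS'; apply: sep => //.
by move: yS'; rewrite !inE => /andP[-> /(subsetP sub)].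
Qed.

Section Detach.
Hypothesis esym : symmetric e.
Variables (S D F0 : {set T}).
Hypotheses (DS : D \subset S) (mF0 : max_dissociation e D F0)
  (sep : forall a y, a \in F0 -> y \in S :\: D -> ~~ e a y).

Let F0D : F0 \subset D. Proof. exact: dissociation_in mF0.1. Qed.

Lemma dissociation_glue F1 : dissociation e (S :\: D) F1 -> dissociation e S (F1 :|: F0).
Proof.
move=> dF1; apply: dissociation_union esym _ _ _.
- exact: dissociation_subset dF1 (subxx _) (subset_trans (dissociation_in dF1) (subsetDl S D)).
- exact: dissociation_subset mF0.1 (subxx _) (subset_trans F0D DS).
- by move=> x y xF1 yF0; rewrite esym; apply: sep => //; exact: (subsetP (dissociation_in dF1)).
Qed.

Lemma card_glue (F1 : {set T}) : F1 \subset S :\: D -> #|F1 :|: F0| = #|F1| + #|F0|.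
Proof.
move=> F1S; rewrite -cardsUI; suff -> : F1 :&: F0 = set0 by rewrite cards0 addn0.
apply/setP => y; rewrite !inE; apply/negP => /andP[/(subsetP F1S)].
by rewrite inE => /andP[/negP yD _] /(subsetP F0D).
Qed.

Lemma dissociation_split_bound F : dissociation e S F ->
  #|F| <= diss_num (S :\: D) + #|F0|.
Proof.
move=> dF; rewrite -(cardsID D F) addnC; apply: leq_add.
  exact: diss_num_ge (dissociation_setD D dF).
exact: mF0.2 (dissociation_setI D dF).
Qed.

Lemma max_dissociation_glue F1 : max_dissociation e (S :\: D) F1 ->
  max_dissociation e S (F1 :|: F0).
Proof.
move=> mF1; split; first exact: dissociation_glue mF1.1.
move=> F' /dissociation_split_bound.
by rewrite card_glue ?(max_dissociation_card mF1) //; exact: dissociation_in mF1.1.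
Qed.

Lemma max_dissociation_restrict F : max_dissociation e S F ->
  max_dissociation e (S :\: D) (F :\: D).
Proof.
move=> [dF mF]; apply: max_dissociationP; first exact: dissociation_setD.
have [F1 dF1 HF1] := diss_num_attained (S :\: D).
have := mF _ (dissociation_glue dF1); rewrite card_glue -?HF1; last exact: dissociation_in dF1.
have := mF0.2 _ (dissociation_setI D dF); have := cardsID D F; nat_lia.
Qed.

Lemma same_status_setD_witness x : x \notin D -> same_status S (S :\: D) x.
Proof.
move=> xD; split; split.
- move=> HA F1 /max_dissociation_glue /HA; rewrite in_setU => /orP[//|/(subsetP F0D) xD'].
  by rewrite xD' in xD.
- by move=> HA F /max_dissociation_restrict /HA; rewrite in_setD => /andP[_ ->].
- by move=> HN F1 /max_dissociation_glue /HN; rewrite in_setU negb_or => /andP[].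
- by move=> HN F /max_dissociation_restrict /HN; rewrite in_setD xD.
Qed.

End Detach.

Lemma detach_same_status (S D : {set T}) x : symmetric e -> D \subset S ->
  detachable S D -> x \notin D -> same_status S (S :\: D) x.
Proof. by move=> esym DS [F0 mF0 sep] xD; exact: (same_status_setD_witness esym DS mF0 sep xD). Qed.

Lemma detach_family_same_status (S W : {set T}) (Df : T -> {set T}) x :
  symmetric e ->
  (forall w, w \in W -> Df w \subset S) ->
  (forall w1 w2, w1 \in W -> w2 \in W -> w1 != w2 -> [disjoint Df w1 & Df w2]) ->
  (forall w, w \in W -> detachable S (Df w)) ->
  (forall w, w \in W -> x \notin Df w) ->
  same_status S (S :\: \bigcup_(w in W) Df w) x.
Proof.
move=> esym; elim: {W}#|W|.+1 {-2}W (ltnSn #|W|) => // n IH W HWn Hsub Hdisj Hdet Hx.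
case: (set_0Vmem W) => [->|[w wW]]; first by rewrite big_set0 setD0; split; split.
rewrite (big_setD1 w wW) /=; set B := \bigcup_(i in W :\ w) Df i.
have -> : S :\: (Df w :|: B) = (S :\: B) :\: Df w by rewrite setDDl setUC.
have sub1 w' : w' \in W :\ w -> w' \in W by rewrite in_setD1 => /andP[].
apply: same_status_trans.
  apply: (IH (W :\ w)); first by move: HWn; rewrite (cardsD1 w W) wW add1n ltnS.
  - by move=> w' /sub1; apply: Hsub.
  - by move=> w1 w2 /sub1 ? /sub1; apply: Hdisj.
  - by move=> w' /sub1; apply: Hdet.
  - by move=> w' /sub1; apply: Hx.
have DwB : Df w \subset S :\: B.
  apply/subsetP => y yD; rewrite inE (subsetP (Hsub w wW) y yD) andbT.
  apply/bigcupP => -[w']; rewrite in_setD1 => /andP[w'w w'W] yD'.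
  have ww' : w != w' by rewrite eq_sym.
  by rewrite (disjointFr (Hdisj w w' wW w'W ww') yD) in yD'.
exact: detach_same_status esym DwB (detachable_subset (subsetDl S B) (Hdet w wW)) (Hx w wW).
Qed.

End Dissociation.

(* [end_path e X w]: X induces a path one of whose ends is w.  The path grows
   by attaching a new end w to the previous end c, w having no other
   neighbour in X. *)
Inductive end_path (T : finType) (e : rel T) : {set T} -> T -> Prop :=
| end_path1 w : end_path e [set w] w
| end_pathS X w c : end_path e X c -> w \notin X -> e w c ->
    (forall y, y \in X -> e w y -> y = c) -> end_path e (w |: X) w.

Definition path_diss (n : nat) : nat := n - n %/ 3.

Section Paths.
Variables (T : finType) (e : rel T).
Hypotheses (esym : symmetric e) (eirr : irreflexive e).

Lemma end_path_in (X : {set T}) w : end_path e X w -> w \in X.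
Proof. by case => [w'|X' w' c _ _ _ _]; rewrite !inE eqxx. Qed.

Lemma path_diss_upper (X : {set T}) w : end_path e X w -> forall G, dissociation e X G ->
  [/\ #|G| <= path_diss #|X|, (w \notin G -> #|G| <= path_diss #|X|.-1) &
      (w \in G -> (forall y, y \in G -> ~~ e w y) -> #|G| <= (path_diss (#|X| - 2)).+1)].
Proof.
elim => [w0|X0 w0 c HX IH wX ewc Hn] G dG; have GS := dissociation_in dG.
  have H1 : #|G| <= 1 by rewrite -(cards1 w0); apply: subset_leq_card.
  rewrite cards1 /path_diss /=; split => // wG.
  suff -> : G = set0 by rewrite cards0.
  apply/setP => y; rewrite inE; apply/negP => yG.
  by move: (subsetP GS y yG); rewrite inE => /eqP yw; rewrite -yw yG in wG.
have cX := end_path_in HX.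
have Hm : 0 < #|X0| by apply/card_gt0P; exists c.
rewrite cardsU1 wX /= add1n /=.
have dG' : dissociation e X0 (G :\ w0).
  apply: (dissociation_subset dG); first exact: subsetDl.
  apply/subsetP => y; rewrite in_setD1 => /andP[yw /(subsetP GS)].
  by rewrite in_setU1 (negbTE yw).
have [U1 U2 U3] := IH _ dG'; have HG := cardsD1 w0 G.
case: (boolP (w0 \in G)) => wG; last first.
  by rewrite (negbTE wG) /= in HG; split => //; move: U1 HG; rewrite /path_diss; nat_lia.
rewrite wG /= in HG.
have cw : c != w0 by apply/eqP => cw; rewrite -cw cX in wX.
case: (boolP (c \in G)) => cG.
  have cG' : c \in G :\ w0 by rewrite in_setD1 cw.
  have iso : forall y, y \in G :\ w0 -> ~~ e c y.
    move=> y; rewrite in_setD1 => /andP[yw yG]; apply/negP => ecy.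
    by apply: (dissociation_two_nbrs dG cG wG yG); rewrite 1?eq_sym // esym.
  have := U3 cG' iso; move: HG Hm; rewrite /path_diss => HG Hm H.
  by split; [nat_lia|by []|move=> _ /(_ c cG); rewrite ewc].
have cG' : c \notin G :\ w0 by rewrite in_setD1 (negbTE cG) andbF.
have := U2 cG'; move: HG Hm; rewrite /path_diss => HG Hm H.
by split => [||_ _]; nat_lia.
Qed.

Lemma dissociation_add_end (X G : {set T}) w c : dissociation e X G -> w \notin X ->
  (forall y, y \in X -> e w y -> y = c) -> (c \in G -> forall y, y \in G -> ~~ e c y) ->
  dissociation e (w |: X) (w |: G).
Proof.
move=> dG wX Hc Hiso; have GX := dissociation_in dG.
rewrite /dissociation setUS //=; apply/forall_inP => x; rewrite in_setU1 => /orP[/eqP->|xG].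
  rewrite -(cards1 c); apply: subset_leq_card; apply/subsetP => y.
  rewrite !inE => /andP[/orP[/eqP->|yG] ewy]; first by rewrite eirr in ewy.
  by rewrite (Hc y (subsetP GX y yG) ewy).
case: (eqVneq x c) => [xc|xc].
  subst x; rewrite -(cards1 w); apply: subset_leq_card; apply/subsetP => y.
  rewrite !inE => /andP[/orP[//|yG] ecy].
  by move: (Hiso xG y yG); rewrite ecy.
apply: leq_trans (dissociation_nbrs dG xG); apply: subset_leq_card; apply/subsetP => y.
rewrite !inE => /andP[/orP[/eqP yw|->//] exy]; subst y.
by move: xc; rewrite (Hc x (subsetP GX x xG)) ?eqxx // esym.
Qed.

Lemma path_diss_witness (X : {set T}) w : end_path e X w ->
  exists G, [/\ dissociation e X G, #|G| = path_diss #|X|,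
    (#|X| %% 3 = 0 -> w \notin G),
    (#|X| %% 3 = 1 -> w \in G /\ forall y, y \in G -> ~~ e w y) &
    (#|X| %% 3 = 2 -> w \in G)].
Proof.
elim => [w0|X0 w0 c HX [G [dG HG H0 H1 H2]] wX ewc Hn].
  exists [set w0]; rewrite cards1; split => //.
  - rewrite /dissociation subxx /=; apply/forall_inP => x; rewrite inE => /eqP->.
    rewrite leq_eqVlt; apply/orP; right; rewrite ltnS leqn0 cards_eq0; apply/eqP/setP => y.
    by rewrite !inE; case: eqP => // ->; rewrite eirr.
  - by move=> _; split; rewrite ?inE ?eqxx // => y; rewrite inE => /eqP->; rewrite eirr.
have GX := dissociation_in dG.
have wG : w0 \notin G by apply/negP => /(subsetP GX); rewrite (negbTE wX).
rewrite cardsU1 wX /= add1n.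
have [Hr|[Hr|Hr]] : #|X0| %% 3 = 0 \/ #|X0| %% 3 = 1 \/ #|X0| %% 3 = 2 by nat_lia.
- have cG : c \notin G by apply: H0.
  exists (w0 |: G); split; try nat_lia.
  + by apply: (dissociation_add_end dG wX Hn) => cG'; rewrite cG' in cG.
  + by rewrite cardsU1 wG /= add1n HG; move: Hr; rewrite /path_diss; nat_lia.
  + move=> _; rewrite in_setU1 eqxx; split => // y; rewrite in_setU1 => /orP[/eqP->|yG].
      by rewrite eirr.
    apply/negP => ewy; move: (Hn y (subsetP GX y yG) ewy) => yc.
    by rewrite -yc yG in cG.
- have [cG iso] := H1 Hr.
  exists (w0 |: G); split; try nat_lia.
  + exact: (dissociation_add_end dG wX Hn).
  + by rewrite cardsU1 wG /= add1n HG; move: Hr; rewrite /path_diss; nat_lia.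
  + by move=> _; rewrite in_setU1 eqxx.
- exists G; split => //; try nat_lia.
  + exact: (dissociation_subset dG) (subset_trans GX (subsetU1 _ _)).
  + by rewrite HG; move: Hr; rewrite /path_diss; nat_lia.
Qed.

Section EndPath.
Variables (X : {set T}) (w : T).
Hypothesis HX : end_path e X w.

Let X_gt0 : 0 < #|X|. Proof. by apply/card_gt0P; exists w; exact: end_path_in HX. Qed.

Lemma path_diss_num : diss_num e X = path_diss #|X|.
Proof.
have [G [dG HG _ _ _]] := path_diss_witness HX.
have [F dF HF] := diss_num_attained e X; have [U1 _ _] := path_diss_upper HX dF.
by apply/eqP; rewrite eqn_leq -{1}HF U1 -HG diss_num_ge.
Qed.

Lemma path_end_avoidable : #|X| %% 3 = 0 ->
  exists2 G, max_dissociation e X G & w \notin G.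
Proof.
move=> Hr; have [G [dG HG H0 _ _]] := path_diss_witness HX.
by exists G; [apply: max_dissociationP; rewrite // path_diss_num HG|exact: H0].
Qed.

Lemma path_end_forced G : #|X| %% 3 != 0 -> dissociation e X G -> w \notin G ->
  #|G| < diss_num e X.
Proof.
move=> /eqP Hr dG wG; have [_ U2 _] := path_diss_upper HX dG; have := U2 wG.
by rewrite path_diss_num /path_diss; move: Hr X_gt0; nat_lia.
Qed.

Lemma path_end_isolated G : #|X| %% 3 = 2 -> dissociation e X G -> w \in G ->
  (forall y, y \in G -> ~~ e w y) -> #|G| < diss_num e X.
Proof.
move=> Hr dG wG iso; have [_ _ U3] := path_diss_upper HX dG; have := U3 wG iso.
by rewrite path_diss_num /path_diss; move: Hr X_gt0; nat_lia.
Qed.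

End EndPath.
End Paths.

Section RootedTree.
Variables (T : finType) (e : rel T).
Hypotheses (esym : symmetric e) (eirr : irreflexive e).
Variables (S : {set T}) (v : T).
Hypotheses (tree : is_tree e S) (vS : v \in S).

Let conn : connected_set e S. Proof. by case: tree => _ []. Qed.
Local Notation d := (dist e S v).
Local Notation D := (desc e S v).
Local Notation C := (children e S v).

Lemma induced_sym (A : {set T}) : symmetric (induced e A).
Proof. by move=> x y; rewrite /induced esym andbCA. Qed.

Lemma edge_neq x y : e x y -> x != y.
Proof. by apply: contraTneq => ->; rewrite eirr. Qed.

Lemma tree_no_detour y a b : y \in S -> a \in S -> a != b -> e y a -> e y b ->
  ~ connect (induced e (S :\ y)) a b.
Proof.
move=> yS aS ab eya eyb /connectP[p Hp Hb].
case: (shortenP Hp) Hb => p' Hp' Up' _ Hb.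
case: tree => _ [_ /(_ (y :: a :: p'))]; apply/negP/negPn.
have ay : a != y by rewrite eq_sym edge_neq.
have p'S x : x \in p' -> x \in S :\ y by apply: (allP (induced_path_in Hp')).
have pn : p' != [::] by case: p' {Hp' Up' p'S} Hb => //= Hb; rewrite -Hb eqxx in ab.
apply/and4P; split.
- rewrite cons_uniq Up' andbT inE negb_or eq_sym ay /=; apply/negP => /p'S.
  by rewrite !inE eqxx.
- by case: p' pn {Hp' Up' p'S Hb}.
- rewrite /= yS aS /=; apply/allP => x /p'S; rewrite inE; by case/andP.
- rewrite /= rcons_path eya /= -Hb esym eyb andbT.
  by apply: sub_path Hp' => x z /and3P[].
Qed.

Lemma depth_root : d v = 0. Proof. exact: dist_refl. Qed.

Lemma depth_eq0 x : x \in S -> d x = 0 -> x = v.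
Proof. exact: dist_eq0. Qed.

Lemma connect_root_avoiding y a : y \in S -> a \in S -> a != y -> d a <= d y ->
  connect (induced e (S :\ y)) a v.
Proof.
move=> yS; elim: {a}(d a).+1 {-2}a (ltnSn (d a)) => // n IH a Hn aS ay Hay.
case: (eqVneq a v) => [->|av]; first exact: connect0.
have [z zS [eza Hz]] := dist_pred conn vS aS av.
have zy : z != y by apply: contraNneq ay => zy; move: Hz Hay; rewrite zy; nat_lia.
apply: connect_trans (IH z _ zS zy _); [apply: connect1| |]; last 2 first.
- nat_lia.
- nat_lia.
by rewrite /induced !inE ay zy aS zS esym.
Qed.

Lemma unique_parent y a b : y \in S -> a \in S -> b \in S -> e y a -> e y b ->
  d a <= d y -> d b <= d y -> a = b.
Proof.
move=> yS aS bS eya eyb Ha Hb; apply/eqP/negPn/negP => ab.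
have ay : a != y by rewrite eq_sym edge_neq.
have by' : b != y by rewrite eq_sym edge_neq.
apply: (tree_no_detour yS aS ab eya eyb).
apply: connect_trans (connect_root_avoiding yS aS ay Ha) _.
by rewrite (sym_connect_sym (induced_sym _)); exact: connect_root_avoiding.
Qed.

Lemma edge_depth x y : x \in S -> y \in S -> e x y -> d x <= d y -> d y = (d x).+1.
Proof.
move=> xS yS exy Hxy; have H1 := dist_edge conn vS xS yS exy.
case: (ltngtP (d x) (d y)) Hxy => // Heq _; first nat_lia.
have yv : y != v.
  apply/eqP => yv; move: Heq; rewrite yv depth_root => /(depth_eq0 xS) xv.
  by move: exy; rewrite xv yv eirr.
have [p pS [epy Hp]] := dist_pred conn vS yS yv.
have xp : x = p by apply: (unique_parent yS xS pS); rewrite 1?esym //; nat_lia.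
subst p; nat_lia.
Qed.

Lemma in_desc u x : (x \in D u) = (x \in S) && (d x == d u + dist e S u x).
Proof. by rewrite inE. Qed.

Lemma desc_subset u : D u \subset S.
Proof. by apply/subsetP => x; rewrite in_desc => /andP[]. Qed.

Lemma desc_self u : u \in S -> u \in D u.
Proof. by move=> uS; rewrite in_desc uS (dist_refl e uS) addn0 eqxx. Qed.

Lemma root_notin_desc u : u \in S -> u != v -> v \notin D u.
Proof.
move=> uS uv; rewrite in_desc depth_root; apply: contra uv => /andP[_ /eqP H].
by apply/eqP; apply: (depth_eq0 uS); nat_lia.
Qed.

Lemma desc_depth u x : u \in S -> x \in D u -> d u <= d x /\ (x != u -> d u < d x).
Proof.
move=> uS; rewrite in_desc => /andP[xS /eqP H]; split; first nat_lia.
move=> xu; have : dist e S u x != 0 by apply: contraNneq xu => /(dist_eq0 conn uS xS) ->.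
nat_lia.
Qed.

Lemma desc_parent u x p : u \in S -> x \in S -> x != u -> p \in S -> e p x ->
  (d p).+1 = d x -> (x \in D u) = (p \in D u).
Proof.
move=> uS xS xu pS epx Hp; rewrite !in_desc xS pS /=.
apply/idP/idP => /eqP H; apply/eqP.
- have [q qS [eqx Hq]] := dist_pred conn uS xS xu.
  have Ht := dist_triangle conn vS uS qS.
  have qp : q = p by apply: (unique_parent xS qS pS); rewrite 1?esym //; nat_lia.
  subst q; nat_lia.
- have := dist_edge conn uS pS xS epx; have := dist_triangle conn vS uS xS; nat_lia.
Qed.

Lemma desc_boundary u x y : u \in S -> x \in D u -> y \in S -> y \notin D u -> e x y ->
  x = u /\ (d y).+1 = d u.
Proof.
move=> uS xD yS yD exy; have xS := subsetP (desc_subset u) x xD.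
case: (leqP (d x) (d y)) => Hxy.
  have Hy := edge_depth xS yS exy Hxy.
  have yu : y != u by apply: contraNneq yD => ->; rewrite desc_self.
  by rewrite (desc_parent uS yS yu xS exy (sym_eq Hy)) xD in yD.
have eyx : e y x by rewrite esym.
have Hx := edge_depth yS xS eyx (ltnW Hxy).
case: (eqVneq x u) => [xu|xu]; first by split => //; rewrite -xu.
by rewrite -(desc_parent uS xS xu yS eyx (sym_eq Hx)) xD in yD.
Qed.

Lemma in_childmod u i w :
  (w \in childmod e S v u i) = (w \in C u) && (#|D w| %% 3 == i).
Proof. by rewrite inE. Qed.

Lemma childP u w : w \in C u -> [/\ w \in S, e u w & d w = (d u).+1].
Proof. by rewrite !inE => /andP[/andP[-> ->] /eqP]. Qed.

Lemma child_neq_root u w : w \in C u -> w != v.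
Proof. by case/childP => _ _ Hw; apply/eqP => wv; move: Hw; rewrite wv depth_root. Qed.

Lemma parent_notin_desc_child u w : u \in S -> w \in C u -> u \notin D w.
Proof.
move=> uS /childP[wS _ Hw]; apply/negP => /(desc_depth wS)[H _].
by rewrite Hw ltnn in H.
Qed.

Lemma desc_child_subset u w : u \in S -> w \in C u -> D w \subset D u.
Proof.
move=> uS /childP[wS euw Hw]; apply/subsetP => x; rewrite !in_desc => /andP[xS /eqP Hx].
rewrite xS /=; have := dist_triangle conn vS uS xS; have := dist_triangle conn uS wS xS.
have := dist_edge conn uS uS wS euw; rewrite (dist_refl e uS) => H3 H2 H1.
apply/eqP; nat_lia.
Qed.

Lemma desc_child_cover u x : u \in S -> x \in D u -> x != u ->
  exists2 w, w \in C u & x \in D w.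
Proof.
move=> uS; elim: {x}(d x).+1 {-2}x (ltnSn (d x)) => // n IH x Hn xD xu.
have xS := subsetP (desc_subset u) x xD.
have [_ /(_ xu) ux] := desc_depth uS xD.
have xv : x != v by apply: contraTneq ux => ->; rewrite depth_root.
have [p pS [epx Hp]] := dist_pred conn vS xS xv.
have pD : p \in D u by rewrite -(desc_parent uS xS xu pS epx Hp).
case: (eqVneq p u) => [pu|pu].
  by exists x; [rewrite !inE xS -pu epx -Hp eqxx|exact: desc_self].
have [|w wc pw] := IH p _ pD pu; first nat_lia.
exists w => //; have [wS _ _] := childP wc.
case: (eqVneq x w) => [->|xw]; first exact: desc_self.
by rewrite (desc_parent wS xS xw pS epx Hp).
Qed.

Lemma desc_children_disjoint u w1 w2 x : u \in S -> w1 \in C u -> w2 \in C u ->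
  w1 != w2 -> x \in D w1 -> x \notin D w2.
Proof.
move=> uS c1 c2 w12; have [w1S euw1 Hw1] := childP c1; have [w2S euw2 Hw2] := childP c2.
elim: {x}(d x).+1 {-2}x (ltnSn (d x)) => // n IH x Hn x1; apply/negP => x2.
have xS := subsetP (desc_subset w1) x x1.
case: (eqVneq x w1) => [xw1|xw1].
  subst x; rewrite (desc_parent w2S w1S w12 uS euw1 (sym_eq Hw1)) in x2.
  by have [] := desc_depth w2S x2; rewrite Hw2 ltnn.
case: (eqVneq x w2) => [xw2|xw2].
  subst x; rewrite (desc_parent w1S w2S xw1 uS euw2 (sym_eq Hw2)) in x1.
  by have [] := desc_depth w1S x1; rewrite Hw1 ltnn.
have xv : x != v by apply: contraTneq x1 => ->; exact: root_notin_desc (child_neq_root c1).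
have [p pS [epx Hp]] := dist_pred conn vS xS xv.
rewrite (desc_parent w1S xS xw1 pS epx Hp) in x1.
rewrite (desc_parent w2S xS xw2 pS epx Hp) in x2.
have Hpn : d p < n by nat_lia.
by have := IH p Hpn x1; rewrite x2.
Qed.

Lemma desc_child_boundary u w x y : u \in S -> w \in C u -> x \in D w ->
  y \in S -> y \notin D w -> e x y -> x = w /\ y = u.
Proof.
move=> uS wc xD yS yD exy; have [wS euw Hw] := childP wc.
have [xw Hy] := desc_boundary wS xD yS yD exy; subst x; split => //.
by apply: (unique_parent wS yS uS exy); rewrite 1?esym //; nat_lia.
Qed.

(* A non-root vertex has its parent as an extra neighbour. *)
Lemma children_lt_deg x : x \in S -> x != v -> #|C x| < deg e S x.
Proof.
move=> xS xv; have [p pS [epx Hp]] := dist_pred conn vS xS xv.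
apply: proper_card; apply/properP; split.
  by apply/subsetP => w; rewrite inE => /andP[].
exists p; first by rewrite inE pS esym.
by rewrite !inE; apply/negP => /andP[_ /eqP]; nat_lia.
Qed.

Lemma tree_setD (X : {set T}) : v \notin X ->
  (forall x p, x \in S -> x != v -> p \in S -> e p x -> (d p).+1 = d x -> p \in X -> x \in X) ->
  is_tree e (S :\: X).
Proof.
move=> vX Hcl; have vS' : v \in S :\: X by rewrite inE vX vS.
have Hc x : x \in S :\: X -> connect (induced e (S :\: X)) x v.
  elim: {x}(d x).+1 {-2}x (ltnSn (d x)) => // n IH x Hn xS'.
  have xS : x \in S by move: xS'; rewrite inE => /andP[].
  case: (eqVneq x v) => [->|xv]; first exact: connect0.
  have [p pS [epx Hp]] := dist_pred conn vS xS xv.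
  have pS' : p \in S :\: X.
    rewrite inE pS andbT; apply: contraTN xS' => /(Hcl _ _ xS xv pS epx Hp) xX.
    by rewrite inE xX.
  apply: connect_trans (IH p _ pS'); last nat_lia.
  by apply: connect1; rewrite /induced xS' pS' esym.
split; first by apply/set0Pn; exists v.
split.
  move=> x y xS yS; apply: connect_trans (Hc x xS) _.
  by rewrite (sym_connect_sym (induced_sym _)); apply: Hc.
move=> c; case: tree => _ [_ /(_ c)]; apply: contra.
rewrite /is_cycle => /and4P[-> -> Ha ->]; rewrite andbT /=.
by apply/allP => y /(allP Ha); rewrite inE => /andP[].
Qed.

Lemma desc_end_path x : x \in S -> x != v -> (forall y, y \in D x -> deg e S y <= 2) ->
  end_path e (D x) x.
Proof.
elim: {x}#|D x|.+1 {-2}x (ltnSn #|D x|) => // n IH x Hn xS xv Hdeg.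
have Hch : #|C x| <= 1 by have := children_lt_deg xS xv; have := Hdeg x (desc_self xS); nat_lia.
case: (posnP #|C x|) => Hc0.
  suff -> : D x = [set x] by exact: end_path1.
  apply/setP => y; rewrite in_set1; case: (eqVneq y x) => [->|yx]; first by rewrite desc_self.
  apply/negP => yD; have [w wc _] := desc_child_cover xS yD yx.
  by move: Hc0 => /eqP; rewrite cards_eq0 => /eqP H; rewrite H inE in wc.
have /cards1P[c Hc] : #|C x| == 1 by rewrite eqn_leq Hch Hc0.
have cc : c \in C x by rewrite Hc inE.
have [cS exc _] := childP cc.
have xDc := parent_notin_desc_child xS cc.
have HD : D x = x |: D c.
  apply/setP => y; rewrite in_setU1; case: (eqVneq y x) => [->|yx] /=; first by rewrite desc_self.
  apply/idP/idP => [yD|]; last exact: (subsetP (desc_child_subset xS cc)).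
  by have [w] := desc_child_cover xS yD yx; rewrite Hc inE => /eqP ->.
rewrite HD; apply: end_pathS exc _ => //.
- apply: IH (child_neq_root cc) _ => //; first by move: Hn; rewrite HD cardsU1 xDc.
  by move=> y yD; apply: Hdeg; rewrite HD inE yD orbT.
- move=> y yD exy; have eyx : e y x by rewrite esym.
  by have [] := desc_child_boundary xS cc yD xS xDc eyx.
Qed.


(* A subtree D[x] is detachable as soon as one of its maximum dissociation
   sets avoids x, since x is the only vertex of D[x] with outside neighbours. *)
Lemma desc_detachable x : x \in S ->
  (exists2 F0, max_dissociation e (D x) F0 & x \notin F0) -> detachable e S (D x).
Proof.
move=> xS [F0 mF0 xF0]; exists F0 => // a y aF0; rewrite in_setD => /andP[yD yS].
apply: contraNN xF0 => eay; have aD := subsetP (dissociation_in mF0.1) a aF0.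
by have [<- _] := desc_boundary xS aD yS yD eay.
Qed.

Lemma tree_setD_desc (W : {set T}) : (forall w, w \in W -> w \in S /\ w != v) ->
  is_tree e (S :\: \bigcup_(w in W) D w) /\ v \in S :\: \bigcup_(w in W) D w.
Proof.
move=> HW; have vW : v \notin \bigcup_(w in W) D w.
  by apply/bigcupP => -[w /HW[wS wv]]; apply/negP; exact: root_notin_desc.
split; last by rewrite in_setD vW.
apply: tree_setD => // x p xS xv pS epx Hp /bigcupP[w wW pD].
apply/bigcupP; exists w => //; have [wS _] := HW w wW.
case: (eqVneq x w) => [->|xw]; first exact: desc_self.
by rewrite (desc_parent wS xS xw pS epx Hp).
Qed.

Section AtBranch.
Variable u : T.
Hypotheses (uS : u \in S)
  (deepest : forall u', u' \in S -> u' != v -> 2 < deg e S u' -> d u' <= d u).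

(* Every vertex strictly below the deepest branch vertex has degree <= 2, so
   the subtree of each child of u is a path ending at that child. *)
Lemma child_end_path w : w \in C u -> end_path e (D w) w.
Proof.
move=> wc; have [wS _ Hw] := childP wc.
apply: (desc_end_path wS (child_neq_root wc)) => y yD.
rewrite leqNgt; apply/negP => Hy; have yS := subsetP (desc_subset w) y yD.
have [H1 _] := desc_depth wS yD.
have yv : y != v by apply/eqP => yv; move: H1; rewrite yv depth_root Hw.
by have := deepest yS yv Hy; move: H1 Hw; nat_lia.
Qed.

Lemma child_detachable w : w \in C u -> #|D w| %% 3 = 0 -> detachable e S (D w).
Proof.
move=> wc Hr; have [wS _ _] := childP wc.
exact: desc_detachable wS (path_end_avoidable esym eirr (child_end_path wc) Hr).
Qed.

Section Deficient.
Variable F : {set T}.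
Hypotheses (mF : max_dissociation e (D u) F) (uF : u \in F).

Lemma deficient_child : (0 < #|childmod e S v u 2|) || (1 < #|childmod e S v u 1|) ->
  exists2 j, j \in C u & #|F :&: D j| < diss_num e (D j).
Proof.
have dF := mF.1.
have forced j : j \in C u -> #|D j| %% 3 != 0 -> j \notin F ->
    #|F :&: D j| < diss_num e (D j).
  move=> jc Hr jF.
  apply: (path_end_forced esym eirr (child_end_path jc) Hr (dissociation_setI (D j) dF)).
  by rewrite inE negb_and jF.
case/orP => [/card_gt0P[j]|/card_gt1P[j1 [j2 []]]]; rewrite !in_childmod.
  case/andP => jc /eqP Hr; exists j => //; case: (boolP (j \in F)) => jF; last first.
    by apply: forced jc _ jF; rewrite Hr.
  have [jS euj _] := childP jc.
  apply: (path_end_isolated esym eirr (child_end_path jc) Hr (dissociation_setI (D j) dF)).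
    by rewrite inE jF desc_self.
  move=> y; rewrite inE => /andP[yF yD]; apply/negP => ejy.
  have uy : u != y by apply: contraNneq (parent_notin_desc_child uS jc) => ->.
  by apply: (dissociation_two_nbrs dF jF uF yF uy); rewrite // esym.
case/andP => j1c /eqP Hr1 /andP[j2c /eqP Hr2] j12.
have [_ e1 _] := childP j1c; have [_ e2 _] := childP j2c.
case: (boolP (j1 \in F)) => j1F; last by exists j1 => //; apply: forced j1c _ j1F; rewrite Hr1.
case: (boolP (j2 \in F)) => j2F; last by exists j2 => //; apply: forced j2c _ j2F; rewrite Hr2.
by case: (dissociation_two_nbrs dF uF j1F j2F j12 e1 e2).
Qed.

(* Exchange: removing u and F :&: D[j] from F and adding a maximum
   dissociation set of D[j] gives a maximum dissociation set avoiding u. *)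
Lemma exchange_at_child j : j \in C u -> #|F :&: D j| < diss_num e (D j) ->
  exists2 F', max_dissociation e (D u) F' & u \notin F'.
Proof.
move=> jc Hlt; have dF := mF.1; have FDu := dissociation_in dF.
have uDj := parent_notin_desc_child uS jc.
have DjDu := desc_child_subset uS jc.
have [Gj mGj] := max_dissociation_exists e (D j); have GjD := dissociation_in mGj.1.
set R := F :\: (u |: D j).
have RF : R \subset F by exact: subsetDl.
have Rb y : y \in R -> y \notin D j /\ y != u by rewrite !inE negb_or => /andP[/andP[]].
have RS y : y \in R -> y \in S.
  by move/(subsetP RF)/(subsetP FDu); apply: (subsetP (desc_subset u)).
(* no edge joins R to Gj: the only edge leaving D[j] ends at u *)
have sepRG x y : x \in R -> y \in Gj -> ~~ e x y.
  move=> xR yG; apply/negP => exy; have [xD xu] := Rb x xR.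
  have eyx : e y x by rewrite esym.
  have [_ xu'] := desc_child_boundary uS jc (subsetP GjD y yG) (RS x xR) xD eyx.
  by rewrite xu' eqxx in xu.
exists (R :|: Gj); last first.
  by rewrite !inE negb_or eqxx /=; apply: contraNN uDj => /(subsetP GjD).
apply: max_dissociationP.
  apply: dissociation_union esym _ _ sepRG.
    exact: dissociation_subset dF RF (subset_trans RF FDu).
  exact: dissociation_subset mGj.1 (subxx _) (subset_trans GjD DjDu).
have HRG : #|R :|: Gj| = #|R| + #|Gj|.
  rewrite -cardsUI; suff -> : R :&: Gj = set0 by rewrite cards0 addn0.
  apply/setP => y; rewrite in_setI in_set0; apply/negP => /andP[/(Rb y)[yD _] /(subsetP GjD)].
  by rewrite (negbTE yD).
have HF := cardsID (u |: D j) F.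
have HI : F :&: (u |: D j) = u |: (F :&: D j).
  by apply/setP => y; rewrite !inE; case: eqP => // ->; rewrite uF.
rewrite HI cardsU1 inE (negbTE uDj) andbF /= in HF.
rewrite -(max_dissociation_card mF) HRG (max_dissociation_card mGj) -HF -/R.
by move: Hlt; nat_lia.
Qed.

End Deficient.

Lemma subtree_detachable :
  (0 < #|childmod e S v u 2|) || (1 < #|childmod e S v u 1|) -> detachable e S (D u).
Proof.
move=> Hc; apply: (desc_detachable uS).
have [F mF] := max_dissociation_exists e (D u).
case: (boolP (u \in F)) => uF; last by exists F.
have [j jc Hlt] := deficient_child mF uF Hc.
exact: (exchange_at_child mF uF jc Hlt).
Qed.

Lemma sibling_order_zero z w :
  ~~ ((0 < #|childmod e S v u 2|) || (1 < #|childmod e S v u 1|)) ->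
  (#|childmod e S v u 1| == 1 -> z \in childmod e S v u 1) ->
  w \in C u -> w != z -> #|D w| %% 3 = 0.
Proof.
rewrite negb_or -!leqNgt leqn0 cards_eq0 => /andP[/eqP H2 H1] Hz wc wz.
have N2 : w \notin childmod e S v u 2 by rewrite H2 inE.
have N1 : w \notin childmod e S v u 1.
  apply/negP => w1; have Hz1 : #|childmod e S v u 1| == 1.
    by rewrite eqn_leq H1 /=; apply/card_gt0P; exists w.
  have : 1 < #|childmod e S v u 1| by apply/card_gt1P; exists w, z; rewrite w1 Hz.
  by case: ltngtP H1.
move: N1 N2; rewrite !in_childmod wc /= => /eqP N1 /eqP N2.
by have := ltn_pmod #|D w| (isT : 0 < 3); move: N1 N2; nat_lia.
Qed.

End AtBranch.

Lemma prune_step_invariant S' : prune_step e v S S' ->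
  same_status e S S' v /\ is_tree e S' /\ v \in S'.
Proof.
case=> u [uS uv _ deepest]; case: ifP => Hc.
  move=> ->; have := tree_setD_desc (W := [set u]); rewrite big_set1 => -[|t1 v1].
    by move=> w /set1P->.
  split => //; apply: detach_same_status esym (desc_subset u)
    (subtree_detachable uS deepest Hc) (root_notin_desc uS uv).
case=> z [zc Hz ->]; set W := C u :\ z.
have -> : \bigcup_(w in C u | w != z) D w = \bigcup_(w in W) D w.
  by apply: eq_bigl => w; rewrite /W in_setD1 andbC.
have Wc w : w \in W -> w \in C u /\ w != z by rewrite in_setD1 andbC => /andP[].
have WSv w : w \in W -> w \in S /\ w != v.
  by move=> /Wc[wc _]; split; [case/childP: wc|exact: child_neq_root wc].
split; last exact: tree_setD_desc WSv.
apply: (detach_family_same_status esym).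
- by move=> w _; exact: desc_subset.
- move=> w1 w2 /Wc[c1 _] /Wc[c2 _] w12; rewrite disjoint_subset; apply/subsetP => x x1.
  exact: desc_children_disjoint uS c1 c2 w12 x1.
- move=> w /Wc[wc wz].
  exact: (child_detachable deepest wc (sibling_order_zero (negbT Hc) Hz wc wz)).
- by move=> w /WSv[wS wv]; exact: root_notin_desc.
Qed.

End RootedTree.

Theorem corollary3p1 (T : finType) (e : rel T) (V Vbar : {set T}) (v : T) :
  symmetric e -> irreflexive e ->
  is_tree e V -> v \in V ->
  pruning e v V Vbar ->
  (in_A e V v <-> in_A e Vbar v) /\ (in_N e V v <-> in_N e Vbar v).
Proof.
move=> esym eirr tV vV P; elim: P tV vV => [S _ _ _|S S' Sb step _ IH tS vS].
  by split; split.
have [same [tS' vS']] := prune_step_invariant esym eirr tS vS step.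
exact: same_status_trans same (IH tS' vS').
Qed.
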